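(* Let ${\bf p}=({\bf p}_1,\dots,{\bf p}_n)$ and ${\bf q}=({\bf q}_1,\dots,{\bf q}_m)$ be configurations in $\mathbb R^d$ such that the affine span of ${\bf p}$ is $\mathbb R^d$ and the affine span of ${\bf q}$ is $\mathbb R^d$. (a) If the framework $(K(n,m),{\bf p},{\bf q})$ has an equilibrium stress whose stress matrix $\Omega$ is positive semidefinite of rank $n+m-d-1$, then $(K(n,m),{\bf p},{\bf q})$ is super stable and universally rigid. (b) If $(K(n,m),{\bf p},{\bf q})$ is dimensionally rigid, then it is universally rigid.
   Context: $(K(n,m),{\bf p},{\bf q})$ is the framework with bars joining ${\bf p}_i$ to ${\bf q}_j$ for all $i,j$ (vertices indexed $1,\dots,N$, $N=n+m$). An equilibrium stress of a framework $(G,{\bf p})$ is an assignment of scalars $\omega_{ij}=\omega_{ji}$ to the edges ($\omega_{ij}=0$ for non-edges) with $\sum_i\omega_{ij}({\bf p}_i-{\bf p}_j)=0$ for every vertex $j$; its stress matrix $\Omega$ is the $N\times N$ symmetric matrix with off-diagonal entries $-\omega_{ij}$ and diagonal entries chosen so all row sums are zero. A framework is universally rigid if every configuration in any $\mathbb R^D$ with the same edge lengths has all pairwise distances equal to those of the original. A framework whose affine span has dimension $d'$ is dimensionally rigid if every configuration in any $\mathbb R^D$ with the same edge lengths has affine span of dimension at most $d'$. Nonzero vectors ${\bf v}_1,\dots,{\bf v}_k\in\mathbb R^d$ lie on a conic at infinity if there is a nonzero symmetric $d\times d$ matrix $Q$ with ${\bf v}_i^tQ{\bf v}_i=0$ for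 all $i$. A framework with $N$ vertices whose affine span is $\mathbb R^d$ is super stable if it has an equilibrium stress with positive semidefinite stress matrix of rank $N-d-1$ and its edge vectors ${\bf p}_i-{\bf p}_j$ do not lie on a conic at infinity. *)

(* Scalars: an arbitrary real closed field R (R = the reals is the intended instance). *)
From HB Require Import structures.
From mathcomp Require Import all_boot all_order all_algebra.
Set Implicit Arguments. Unset Strict Implicit. Unset Printing Implicit Defensive.
Import Order.TTheory GRing.Theory Num.Theory.
Local Open Scope ring_scope.

Section Frameworks.
Variable R : rcfType.

Definition sqnorm (D : nat) (v : 'rV[R]_D) : R := \sum_(k < D) v 0 k ^+ 2.

(* dimension of the affine span of a (nonempty) configuration:
   rank of the span of all difference vectors x i - x j *)
Definition aff_dim (N D : nat) (x : 'I_N -> 'rV[R]_D) : nat :=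
  \rank (\sum_(i < N) \sum_(j < N) <<x i - x j>>)%MS.

Definition full_aff_span (N D : nat) (x : 'I_N -> 'rV[R]_D) : Prop :=
  (0 < N)%N /\ aff_dim x = D.

Definition eq_stress (N D : nat) (G : rel 'I_N) (x : 'I_N -> 'rV[R]_D)
    (w : 'I_N -> 'I_N -> R) : Prop :=
  [/\ forall i j, w i j = w j i,
      forall i j, ~~ G i j -> w i j = 0 &
      forall j, \sum_(i < N) w i j *: (x i - x j) = 0].

Definition stress_mx (N : nat) (w : 'I_N -> 'I_N -> R) : 'M[R]_N :=
  \matrix_(i, j) (if i == j then \sum_(k < N | k != i) w i k else - w i j).

Definition psd (N : nat) (A : 'M[R]_N) : Prop :=
  forall v : 'rV[R]_N, 0 <= (v *m A *m v^T) 0 0.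

Definition edges_on_conic_at_infinity (N D : nat) (G : rel 'I_N)
    (x : 'I_N -> 'rV[R]_D) : Prop :=
  exists Q : 'M[R]_D, [/\ Q^T = Q, Q != 0 &
    forall i j, G i j -> ((x i - x j) *m Q *m (x i - x j)^T) 0 0 = 0].

Definition super_stable (N D : nat) (G : rel 'I_N) (x : 'I_N -> 'rV[R]_D) : Prop :=
  full_aff_span x /\
  (exists w, [/\ eq_stress G x w, psd (stress_mx w) &
                 \rank (stress_mx w) = (N - D - 1)%N]) /\
  ~ edges_on_conic_at_infinity G x.

Definition universally_rigid (N D : nat) (G : rel 'I_N) (x : 'I_N -> 'rV[R]_D) : Prop :=
  forall (D' : nat) (y : 'I_N -> 'rV[R]_D'),
    (forall i j, G i j -> sqnorm (y i - y j) = sqnorm (x i - x j)) ->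
    forall i j, sqnorm (y i - y j) = sqnorm (x i - x j).

Definition dimensionally_rigid (N D : nat) (G : rel 'I_N) (x : 'I_N -> 'rV[R]_D) : Prop :=
  forall (D' : nat) (y : 'I_N -> 'rV[R]_D'),
    (forall i j, G i j -> sqnorm (y i - y j) = sqnorm (x i - x j)) ->
    (aff_dim y <= aff_dim x)%N.

End Frameworks.

(* complete bipartite graph K(n,m) on 'I_(n+m): first n vertices vs last m *)
Definition Kbip (n m : nat) : rel 'I_(n + m) := fun a b =>
  match split a, split b with
  | inl _, inr _ => true
  | inr _, inl _ => true
  | _, _ => false
  end.

(* joint configuration (p, q): vertex i<n is p_i, vertex n+j is q_j *)
Definition bipconf (T : Type) (n m : nat) (p : 'I_n -> T) (q : 'I_m -> T)
  : 'I_(n + m) -> T := fun k =>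
  match split k with inl i => p i | inr j => q j end.
Arguments Kbip n m : clear implicits.

From HB Require Import structures.
From mathcomp Require Import all_boot all_order all_algebra.
From mathcomp Require Import ring lra.
Import Order.TTheory GRing.Theory Num.Theory.
Set Implicit Arguments. Unset Strict Implicit. Unset Printing Implicit Defensive.
Local Open Scope ring_scope.

(* In both parts, a configuration y with the edge lengths of x is shown to be
   an affine image of x, i.e. y_a - y_b = (x_a - x_b) A for a fixed matrix A.
   In (a) the coordinate vectors of y have zero stress energy, hence lie in the
   kernel of the PSD stress matrix, which by the rank hypothesis is spanned by
   the coordinate vectors of x and the all-ones vector. In (b) the
   configuration z = (3/5 x, 4/5 y) has the edge lengths of x, so dimensional
   rigidity bounds its span by d; as its first block already spans R^d, the
   second block is a linear function of the first.
   An affine image preserving the edge lengths makes the symmetric form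
   A A^T - I vanish on every edge vector.  For K(n,m) with both parts spanning,
   polarisation shows that such a form vanishes on (p_i - p_i') x (q_j - q_j'),
   hence is zero; so A is orthogonal and every distance is preserved. *)

Section Rigidity.
Variable R : rcfType.

Definition diff_span (N D : nat) (x : 'I_N -> 'rV[R]_D) : 'M[R]_D :=
  (\sum_(i < N) \sum_(j < N) <<x i - x j>>)%MS.

Lemma diff_span_sup N D (x : 'I_N -> 'rV[R]_D) i j : (x i - x j <= diff_span x)%MS.
Proof. by apply: (sumsmx_sup i) => //; apply: (sumsmx_sup j) => //; rewrite genmxE. Qed.

Lemma diff_span_subP N D (x : 'I_N -> 'rV[R]_D) k (T : 'M[R]_(k, D)) :
  (forall i j, (x i - x j <= T)%MS) -> (diff_span x <= T)%MS.
Proof.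
by move=> H; apply/sumsmx_subP => i _; apply/sumsmx_subP => j _; rewrite genmxE.
Qed.

Lemma diff_span_full N D (x : 'I_N -> 'rV[R]_D) :
  aff_dim x = D -> (1%:M <= diff_span x)%MS.
Proof. by move=> /eqP xD; rewrite sub1mx. Qed.

Lemma diff_span_full_ker N D (x : 'I_N -> 'rV[R]_D) k (M : 'M[R]_(D, k)) :
  (1%:M <= diff_span x)%MS -> (forall i j, (x i - x j) *m M = 0) -> M = 0.
Proof.
move=> F H; have : (1%:M <= kermx M)%MS.
  by apply: submx_trans F _; apply: diff_span_subP => i j; apply/sub_kermxP.
by move/sub_kermxP; rewrite mul1mx.
Qed.

Lemma mx11_eq0 (A : 'M[R]_1) : A 0 0 = 0 -> A = 0.
Proof. by move=> H; apply/matrixP => i j; rewrite !ord1 H mxE. Qed.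

Definition bform D (Q : 'M[R]_D) (u v : 'rV[R]_D) : R := (u *m Q *m v^T) 0 0.

Lemma bformBl D (Q : 'M[R]_D) u1 u2 v : bform Q (u1 - u2) v = bform Q u1 v - bform Q u2 v.
Proof. by rewrite /bform !mulmxBl !mxE. Qed.

Lemma bformBr D (Q : 'M[R]_D) u v1 v2 : bform Q u (v1 - v2) = bform Q u v1 - bform Q u v2.
Proof. by rewrite /bform linearB /= mulmxBr !mxE. Qed.

Lemma bformZl D (Q : 'M[R]_D) c u v : bform Q (c *: u) v = c * bform Q u v.
Proof. by rewrite /bform -!scalemxAl mxE. Qed.

Lemma bformZr D (Q : 'M[R]_D) c u v : bform Q u (c *: v) = c * bform Q u v.
Proof. by rewrite /bform linearZ /= -scalemxAr mxE. Qed.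

Lemma bformBQ D (Q1 Q2 : 'M[R]_D) u v :
  bform (Q1 - Q2) u v = bform Q1 u v - bform Q2 u v.
Proof. by rewrite /bform mulmxBr mulmxBl !mxE. Qed.

Lemma bformC D (Q : 'M[R]_D) u v : Q^T = Q -> bform Q u v = bform Q v u.
Proof.
move=> QT; rewrite /bform; have <- : (u *m Q *m v^T)^T = v *m Q *m u^T.
  by rewrite !trmx_mul trmxK QT mulmxA.
by rewrite [RHS]mxE.
Qed.

Lemma sqnormE D (v : 'rV[R]_D) : sqnorm v = (v *m v^T) 0 0.
Proof. by rewrite /sqnorm mxE; apply: eq_bigr => k _; rewrite mxE expr2. Qed.

Lemma bform1 D (u : 'rV[R]_D) : bform 1%:M u u = sqnorm u.
Proof. by rewrite /bform mulmx1 sqnormE. Qed.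

Lemma sqnorm_mul D D' (e : 'rV[R]_D) (A : 'M[R]_(D, D')) :
  sqnorm (e *m A) = bform (A *m A^T) e e.
Proof. by rewrite sqnormE /bform trmx_mul !mulmxA. Qed.

Lemma sqnorm_row_mx D1 D2 (u : 'rV[R]_D1) (v : 'rV[R]_D2) :
  sqnorm (row_mx u v) = sqnorm u + sqnorm v.
Proof.
rewrite /sqnorm big_split_ord /=.
by congr (_ + _); apply: eq_bigr => k _; rewrite ?row_mxEl ?row_mxEr.
Qed.

Lemma sqnormZ D (c : R) (u : 'rV[R]_D) : sqnorm (c *: u) = c ^+ 2 * sqnorm u.
Proof. by rewrite /sqnorm mulr_sumr; apply: eq_bigr => k _; rewrite mxE exprMn. Qed.

Lemma affine_image_congruent N D D' (G : rel 'I_N) (x : 'I_N -> 'rV[R]_D)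
    (y : 'I_N -> 'rV[R]_D') (A : 'M[R]_(D, D')) :
  ~ edges_on_conic_at_infinity G x ->
  (forall a b, y a - y b = (x a - x b) *m A) ->
  (forall a b, G a b -> sqnorm (y a - y b) = sqnorm (x a - x b)) ->
  forall a b, sqnorm (y a - y b) = sqnorm (x a - x b).
Proof.
move=> noQ hA hE.
have AAT : A *m A^T = 1%:M.
  apply/eqP; rewrite -subr_eq0; apply/negPn/negP => Qn0; apply: noQ.
  exists (A *m A^T - 1%:M); split => //.
    by rewrite linearB /= trmx_mul trmxK trmx1.
  move=> a b ab; change (bform (A *m A^T - 1%:M) (x a - x b) (x a - x b) = 0).
  by rewrite bformBQ bform1 -sqnorm_mul -hA hE ?subrr.
by move=> a b; rewrite hA sqnorm_mul AAT bform1.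
Qed.

Lemma bipconf_lshift T n m (p : 'I_n -> T) (q : 'I_m -> T) i :
  bipconf p q (lshift m i) = p i.
Proof. by rewrite /bipconf (unsplitK (inl i : 'I_n + 'I_m)). Qed.

Lemma bipconf_rshift T n m (p : 'I_n -> T) (q : 'I_m -> T) j :
  bipconf p q (rshift n j) = q j.
Proof. by rewrite /bipconf (unsplitK (inr j : 'I_n + 'I_m)). Qed.

Lemma Kbip_lshift_rshift n m i j : Kbip n m (lshift m i) (rshift n j).
Proof.
by rewrite /Kbip (unsplitK (inl i : 'I_n + 'I_m)) (unsplitK (inr j : 'I_n + 'I_m)).
Qed.

Lemma full_aff_span_bipconf n m d (p : 'I_n -> 'rV[R]_d) (q : 'I_m -> 'rV[R]_d) :
  full_aff_span p -> full_aff_span (bipconf p q).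
Proof.
move=> [n_gt0 /diff_span_full Fp]; split; first by rewrite ltn_addr.
apply/eqP; rewrite -[_ == _]/(row_full _) -sub1mx.
apply: submx_trans Fp _; apply: diff_span_subP => i j.
by rewrite -(bipconf_lshift p q i) -(bipconf_lshift p q j) diff_span_sup.
Qed.

Lemma Kbip_not_on_conic n m d (p : 'I_n -> 'rV[R]_d) (q : 'I_m -> 'rV[R]_d) :
  aff_dim p = d -> aff_dim q = d ->
  ~ edges_on_conic_at_infinity (Kbip n m) (bipconf p q).
Proof.
move=> /diff_span_full Fp /diff_span_full Fq [Q [QT /eqP Qn0 HE]]; apply: Qn0.
have pq0 i j : bform Q (p i - q j) (p i - q j) = 0.
  rewrite -(bipconf_lshift p q i) -(bipconf_rshift p q j).
  exact/HE/Kbip_lshift_rshift.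
have cross0 i i' j j' : bform Q (p i - p i') (q j - q j') = 0.
  move: (pq0 i j) (pq0 i' j) (pq0 i j') (pq0 i' j').
  by rewrite !(bformBl, bformBr) !(bformC (q _) (p _) QT); lra.
apply: (diff_span_full_ker Fq) => j j'.
apply: trmx_inj; rewrite trmx_mul QT trmx0.
apply: (diff_span_full_ker Fp) => i i'; apply: mx11_eq0.
by rewrite mulmxA; apply: cross0.
Qed.

Lemma factor_through_full_rank k D d D' (S : 'M[R]_(k, D))
    (P1 : 'M[R]_(D, d)) (P2 : 'M[R]_(D, D')) :
  (\rank S <= d)%N -> row_full (S *m P1) ->
  exists A : 'M[R]_(d, D'), forall u : 'rV[R]_D, (u <= S)%MS -> u *m P2 = u *m P1 *m A.
Proof.
move=> rS fullM; set M := S *m P1 in fullM *.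
have ker0 : \rank (S :&: kermx P1)%MS = 0%N.
  apply/eqP; rewrite -(eqn_add2l (\rank M)) addn0 mxrank_mul_ker (eqP fullM).
  by rewrite eqn_leq rS -(eqP fullM) mxrankM_maxl.
have P1_inj (v : 'rV[R]_D) : (v <= S)%MS -> v *m P1 = 0 -> v = 0.
  move=> vS /sub_kermxP vK; apply/eqP; rewrite -submx0.
  have : (v <= S :&: kermx P1)%MS by rewrite sub_capmx vS.
  by move/mxrankS; rewrite ker0 leqn0 mxrank_eq0 => /eqP ->; rewrite sub0mx.
exists (pinvmx M *m S *m P2) => u uS.
have [a ->] := submxP uS.
set b := a *m S *m P1 *m pinvmx M.
suff aSb : a *m S = b *m S by rewrite {1}aSb /b !mulmxA.
apply/eqP; rewrite -subr_eq0 -mulmxBl; apply/eqP/P1_inj; first exact: submxMl.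
have bM : b *m M = a *m M by rewrite mulmxKpV ?submx_full // mulmxA.
by rewrite -mulmxA -/M mulmxBl bM subrr.
Qed.

Lemma dimensionally_rigid_affine_image N D (G : rel 'I_N) (x : 'I_N -> 'rV[R]_D)
    D' (y : 'I_N -> 'rV[R]_D') :
  aff_dim x = D -> dimensionally_rigid G x ->
  (forall a b, G a b -> sqnorm (y a - y b) = sqnorm (x a - x b)) ->
  exists A : 'M[R]_(D, D'), forall a b, y a - y b = (x a - x b) *m A.
Proof.
move=> dimx hdr hE.
pose z a := row_mx ((3/5 : R) *: x a) ((4/5 : R) *: y a).
have zB a b : z a - z b = row_mx ((3/5 : R) *: (x a - x b)) ((4/5 : R) *: (y a - y b)).
  by rewrite /z opp_row_mx add_row_mx !scalerBr.
have dimz : (aff_dim z <= D)%N.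
  rewrite -[X in (_ <= X)%N]dimx; apply: hdr => a b ab.
  by rewrite zB sqnorm_row_mx !sqnormZ hE //; lra.
pose P1 : 'M[R]_(D + D', D) := col_mx 1%:M 0.
pose P2 : 'M[R]_(D + D', D') := col_mx 0 1%:M.
have zP1 a b : (z a - z b) *m P1 = (3/5 : R) *: (x a - x b).
  by rewrite zB mul_row_col mulmx1 mulmx0 addr0.
have zP2 a b : (z a - z b) *m P2 = (4/5 : R) *: (y a - y b).
  by rewrite zB mul_row_col mulmx1 mulmx0 add0r.
have full_zP1 : row_full (diff_span z *m P1).
  rewrite -sub1mx; apply: submx_trans (diff_span_full dimx) _.
  apply: diff_span_subP => a b.
  have -> : x a - x b = (5/3 : R) *: ((z a - z b) *m P1).
    by rewrite zP1 scalerA (_ : 5/3 * (3/5) = 1 :> R) ?scale1r //; field.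
  exact/scalemx_sub/submxMr/diff_span_sup.
have [A hA] := factor_through_full_rank P2 dimz full_zP1.
exists ((3/4 : R) *: A) => a b.
have := hA _ (diff_span_sup z a b); rewrite zP1 zP2 -scalemxAl => h.
apply: (@scalerI _ _ (4/5 : R)); first by rewrite mulf_neq0 ?invr_eq0 ?pnatr_eq0.
by rewrite h -scalemxAr scalerA; congr (_ *: _); field.
Qed.

Lemma psd_bform_eq0 N (A : 'M[R]_N) (v : 'rV[R]_N) :
  A^T = A -> psd A -> bform A v v = 0 -> v *m A = 0.
Proof.
move=> AT Apsd vv0; apply/matrixP => i j; rewrite (ord1 i) [RHS]mxE.
pose e : 'rV[R]_N := delta_mx 0 j.
have ve : bform A v e = (v *m A) 0 j by rewrite /bform trmx_delta -colE mxE.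
set a := (v *m A) 0 j; set b := bform A e e.
have b_ge0 : 0 <= b by apply: Apsd.
pose t := a / (b + 1).
have tb : t * (b + 1) = a by rewrite /t mulfVK // gt_eqF // ltr_wpDl.
(* evaluate the form at v - t e, with t chosen so that the result is -(b + 2) t^2 *)
have := Apsd (v - t *: e).
rewrite -/(bform _ _ _) !(bformBl, bformBr, bformZl, bformZr) (bformC e v AT).
rewrite vv0 ve -/a -/b => h.
have t0 : t = 0 by rewrite -tb in h; nra.
by rewrite -tb t0 mul0r.
Qed.

Definition coord_mx N D (x : 'I_N -> 'rV[R]_D) : 'M[R]_(D, N) := \matrix_(c, i) x i 0 c.

Definition affine_coord_mx N D (x : 'I_N -> 'rV[R]_D) : 'M[R]_(D + 1, N) :=
  col_mx (coord_mx x) (const_mx 1).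

Section StressMatrix.
Variables (N : nat) (w : 'I_N -> 'I_N -> R).
Hypothesis w_sym : forall i j, w i j = w j i.
Local Notation O := (stress_mx w).

Lemma stress_mx_tr : O^T = O.
Proof.
by apply/matrixP => i j; rewrite !mxE eq_sym; case: eqP => [->|_] //; rewrite w_sym.
Qed.

Lemma mul_stress_mx (v : 'rV[R]_N) j :
  (v *m O) 0 j = - \sum_i w i j * (v 0 i - v 0 j).
Proof.
rewrite mxE (bigD1 j) //= [in RHS](bigD1 j) //= subrr mulr0 add0r mxE eqxx.
rewrite big_distrr /= -sumrN -big_split /=.
by apply: eq_bigr => i ij; rewrite mxE (negPf ij) w_sym; ring.
Qed.

Lemma stress_energy (v : 'rV[R]_N) :
  2 * bform O v v = \sum_j \sum_i w i j * (v 0 i - v 0 j) ^+ 2.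
Proof.
have Ej : bform O v v = - \sum_j \sum_i w i j * (v 0 i - v 0 j) * v 0 j.
  rewrite /bform mxE -sumrN; apply: eq_bigr => j _.
  by rewrite mul_stress_mx mxE mulNr big_distrl.
have Ei : bform O v v = \sum_j \sum_i w i j * (v 0 i - v 0 j) * v 0 i.
  rewrite Ej exchange_big /= -sumrN; apply: eq_bigr => i _.
  by rewrite -sumrN; apply: eq_bigr => j _; rewrite (w_sym j i); ring.
rewrite mulr2n mulrDl mul1r {1}Ei Ej -sumrB; apply: eq_bigr => j _.
by rewrite -sumrB; apply: eq_bigr => i _; ring.
Qed.

Lemma sum_stress_energy D (x : 'I_N -> 'rV[R]_D) :
  \sum_c 2 * bform O (row c (coord_mx x)) (row c (coord_mx x)) =
  \sum_j \sum_i w i j * sqnorm (x i - x j).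
Proof.
under eq_bigr do rewrite stress_energy.
rewrite exchange_big; apply: eq_bigr => j _.
rewrite exchange_big; apply: eq_bigr => i _.
by rewrite /sqnorm mulr_sumr; apply: eq_bigr => c _; rewrite !mxE.
Qed.

End StressMatrix.

Lemma eq_stress_coord_mx N D (G : rel 'I_N) (x : 'I_N -> 'rV[R]_D) w :
  eq_stress G x w -> coord_mx x *m stress_mx w = 0.
Proof.
move=> [w_sym _ heq]; apply/row_matrixP => c; rewrite row_mul row0.
apply/matrixP => i j; rewrite (ord1 i) mul_stress_mx // [RHS]mxE.
have := congr1 (fun v : 'rV[R]_D => v 0 c) (heq j); rewrite summxE /= [RHS]mxE => h.
by apply/eqP; rewrite oppr_eq0 -[X in _ == X]h; apply/eqP; apply: eq_bigr => k _; rewrite !mxE.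
Qed.

Lemma psd_stress_coord_mx N D (G : rel 'I_N) (x : 'I_N -> 'rV[R]_D) w
    D' (y : 'I_N -> 'rV[R]_D') :
  eq_stress G x w -> psd (stress_mx w) ->
  (forall a b, G a b -> sqnorm (y a - y b) = sqnorm (x a - x b)) ->
  coord_mx y *m stress_mx w = 0.
Proof.
move=> hw Opsd hE; have [w_sym w_edge _] := hw.
have energy_y :
    \sum_c 2 * bform (stress_mx w) (row c (coord_mx y)) (row c (coord_mx y)) = 0.
  rewrite sum_stress_energy //.
  transitivity (\sum_j \sum_i w i j * sqnorm (x i - x j)).
    apply: eq_bigr => j _; apply: eq_bigr => i _.
    by case Gij: (G i j); [rewrite hE | rewrite w_edge ?Gij // !mul0r].
  rewrite -sum_stress_energy //; apply: big1 => c _.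
  by rewrite /bform -row_mul (eq_stress_coord_mx hw) row0 !mul0mx mxE mulr0.
have energy_ge0 c :
    true -> 0 <= 2 * bform (stress_mx w) (row c (coord_mx y)) (row c (coord_mx y)).
  by move=> _; rewrite mulr_ge0 //; apply: Opsd.
apply/row_matrixP => c; rewrite row_mul row0.
apply: (psd_bform_eq0 (stress_mx_tr w_sym) Opsd).
move: (psumr_eq0P energy_ge0 energy_y) => /(_ c isT) /eqP.
by rewrite mulf_eq0 pnatr_eq0 => /eqP.
Qed.

Lemma full_aff_span_affine_eq0 N D (x : 'I_N -> 'rV[R]_D) (u : 'rV[R]_D) (c : R) :
  full_aff_span x -> (forall i, (x i *m u^T) 0 0 + c = 0) -> u = 0 /\ c = 0.
Proof.
move=> [N_gt0 /diff_span_full Fx] H.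
have xu i : (x i *m u^T) 0 0 = - c by apply/eqP; rewrite -addr_eq0 H.
have u0 : u = 0.
  apply: trmx_inj; rewrite trmx0; apply: (diff_span_full_ker Fx) => i j.
  by apply: mx11_eq0; rewrite mulmxBl [LHS]mxE [X in _ + X]mxE !xu subrr.
split=> //; have := H (Ordinal N_gt0).
by rewrite u0 trmx0 mulmx0 mxE add0r.
Qed.

Lemma mul_affine_coord_mx N D (x : 'I_N -> 'rV[R]_D) k (B : 'M[R]_(k, D + 1)) c a :
  (B *m affine_coord_mx x) c a = (x a *m (lsubmx B)^T) 0 c + rsubmx B c 0.
Proof.
rewrite -{1}(hsubmxK B) mul_row_col mxE; congr (_ + _).
  by rewrite !mxE; apply: eq_bigr => l _; rewrite !mxE mulrC.
by rewrite mxE big_ord1 !mxE mulr1.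
Qed.

Lemma row_free_affine_coord_mx N D (x : 'I_N -> 'rV[R]_D) :
  full_aff_span x -> row_free (affine_coord_mx x).
Proof.
move=> hx; rewrite -kermx_eq0; apply/eqP/row_matrixP => r; rewrite row0.
set t := row r _.
have tK : t *m affine_coord_mx x = 0 by rewrite /t -row_mul mulmx_ker row0.
have [u0 c0] : lsubmx t = 0 /\ rsubmx t 0 0 = 0.
  apply: (full_aff_span_affine_eq0 (u := lsubmx t) (c := rsubmx t 0 0) hx) => i.
  by move/matrixP/(_ 0 i): tK; rewrite mul_affine_coord_mx => ->; rewrite mxE.
by rewrite -[t]hsubmxK u0 (mx11_eq0 c0) row_mx0.
Qed.

Lemma kermx_stress_mx_sub N D (G : rel 'I_N) (x : 'I_N -> 'rV[R]_D) w :
  full_aff_span x -> eq_stress G x w -> \rank (stress_mx w) = (N - D - 1)%N ->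
  (kermx (stress_mx w) <= affine_coord_mx x)%MS.
Proof.
move=> hx hw rk; have [w_sym _ _] := hw.
have KO : affine_coord_mx x *m stress_mx w = 0.
  rewrite mul_col_mx (eq_stress_coord_mx hw); apply/eqP; rewrite col_mx_eq0 eqxx /=.
  apply/eqP/matrixP => i j; rewrite (ord1 i) mul_stress_mx // [RHS]mxE.
  by rewrite big1 ?oppr0 // => k _; rewrite !mxE subrr mulr0.
have rK : \rank (affine_coord_mx x) = (D + 1)%N by apply/eqP/row_free_affine_coord_mx.
have DN : (D + 1 <= N)%N by rewrite -rK rank_leq_col.
have rker : \rank (kermx (stress_mx w)) = (D + 1)%N.
  by rewrite mxrank_ker rk -subnDA subKn.
have Ksub : (affine_coord_mx x <= kermx (stress_mx w))%MS by apply/sub_kermxP.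
by rewrite -(geq_leqif (mxrank_leqif_sup Ksub)) rker rK.
Qed.

Lemma coord_mx_sub_affine_image N D D' (x : 'I_N -> 'rV[R]_D) (y : 'I_N -> 'rV[R]_D') :
  (coord_mx y <= affine_coord_mx x)%MS ->
  exists A : 'M[R]_(D, D'), forall a b, y a - y b = (x a - x b) *m A.
Proof.
move=> /submxP[B YB]; exists (lsubmx B)^T => a b; apply/rowP => c.
have ye a' : y a' 0 c = (x a' *m (lsubmx B)^T) 0 c + rsubmx B c 0.
  by rewrite -mul_affine_coord_mx -YB mxE.
rewrite mulmxBl [LHS]mxE [RHS]mxE [X in _ + X = _]mxE [X in _ = _ + X]mxE !ye.
by rewrite opprD addrACA subrr addr0.
Qed.

Lemma psd_stress_affine_image N D (G : rel 'I_N) (x : 'I_N -> 'rV[R]_D) w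
    D' (y : 'I_N -> 'rV[R]_D') :
  full_aff_span x -> eq_stress G x w -> psd (stress_mx w) ->
  \rank (stress_mx w) = (N - D - 1)%N ->
  (forall a b, G a b -> sqnorm (y a - y b) = sqnorm (x a - x b)) ->
  exists A : 'M[R]_(D, D'), forall a b, y a - y b = (x a - x b) *m A.
Proof.
move=> hx hw Opsd rk hE; apply: coord_mx_sub_affine_image.
apply: submx_trans (kermx_stress_mx_sub hx hw rk).
exact/sub_kermxP/(psd_stress_coord_mx hw Opsd hE).
Qed.

End Rigidity.

Theorem mainTheorem3 (R : rcfType) (n m d : nat)
    (p : 'I_n -> 'rV[R]_d) (q : 'I_m -> 'rV[R]_d)
    (hp : full_aff_span p) (hq : full_aff_span q) :
  ((exists w : 'I_(n + m) -> 'I_(n + m) -> R,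
       [/\ eq_stress (Kbip n m) (bipconf p q) w,
           psd (stress_mx w) &
           \rank (stress_mx w) = (n + m - d - 1)%N]) ->
     super_stable (Kbip n m) (bipconf p q) /\
     universally_rigid (Kbip n m) (bipconf p q)) /\
  (dimensionally_rigid (Kbip n m) (bipconf p q) ->
     universally_rigid (Kbip n m) (bipconf p q)).
Proof.
have hx := full_aff_span_bipconf q hp.
have noQ := Kbip_not_on_conic hp.2 hq.2.
split.
  move=> [w [hw Opsd rk]]; split; first by split; [|split; [exists w|]].
  move=> D' y hE; have [A hA] := psd_stress_affine_image hx hw Opsd rk hE.
  exact: affine_image_congruent noQ hA hE.
move=> hdr D' y hE; have [A hA] := dimensionally_rigid_affine_image hx.2 hdr hE.
exact: affine_image_congruent noQ hA hE.
Qed.
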